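(* For every $f\in C_b^*$ there is a sequence $(u_n)\subset K$ such that $u_n\to f$ pointwise on $\mathbb R\times H$ and $\sup_{n,t,x}|u_n(t,x)|\le1+\sup_{t,x}|f(t,x)|$.
   Context: $H$ is a real separable Hilbert space, $T>0$, and $D(A^* )$ is a dense linear subspace of $H$ (the common domain of the adjoint operators $A^*(t)$). $K$ is the set of real parts of elements of the complex linear span of the functions $(t,x)\mapsto\Phi(t)e^{i\langle x,h(t)\rangle}$ on $\mathbb R\times H$, where $\Phi\in C^1(\mathbb R,\mathbb R)$ is $T$-periodic and $h\in C^1(\mathbb R,H)$ is $T$-periodic with values in $D(A^* )$. $C_b^*$ is the set of continuous bounded $f:\mathbb R\times H\to\mathbb R$ that are $T$-periodic in the first variable. *)

From Stdlib Require Import Reals Lra.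
Open Scope R_scope.

Record RHilbert := {
  hcar :> Type;
  hzero : hcar;
  hadd : hcar -> hcar -> hcar;
  hopp : hcar -> hcar;
  hscal : R -> hcar -> hcar;
  hinner : hcar -> hcar -> R;
  hadd_assoc : forall x y z, hadd x (hadd y z) = hadd (hadd x y) z;
  hadd_comm : forall x y, hadd x y = hadd y x;
  hadd_zero : forall x, hadd x hzero = x;
  hadd_opp : forall x, hadd x (hopp x) = hzero;
  hscal_assoc : forall a b x, hscal a (hscal b x) = hscal (a * b) x;
  hscal_one : forall x, hscal 1 x = x;
  hscal_distr_v : forall a x y, hscal a (hadd x y) = hadd (hscal a x) (hscal a y);
  hscal_distr_s : forall a b x, hscal (a + b) x = hadd (hscal a x) (hscal b x);
  hinner_sym : forall x y, hinner x y = hinner y x;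
  hinner_add_l : forall x y z, hinner (hadd x y) z = hinner x z + hinner y z;
  hinner_scal_l : forall a x y, hinner (hscal a x) y = a * hinner x y;
  hinner_pos : forall x, 0 <= hinner x x;
  hinner_def : forall x, hinner x x = 0 -> x = hzero;
  hcomplete : forall u : nat -> hcar,
    (forall eps, eps > 0 -> exists N, forall m n, (m >= N)%nat -> (n >= N)%nat ->
        sqrt (hinner (hadd (u m) (hopp (u n))) (hadd (u m) (hopp (u n)))) < eps) ->
    exists l, forall eps, eps > 0 -> exists N, forall n, (n >= N)%nat ->
        sqrt (hinner (hadd (u n) (hopp l)) (hadd (u n) (hopp l))) < eps;
  hseparable : exists d : nat -> hcar, forall x eps, eps > 0 -> exists n,
        sqrt (hinner (hadd x (hopp (d n))) (hadd x (hopp (d n)))) < eps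
}.

Definition hnorm {H : RHilbert} (x : H) : R := sqrt (hinner H x x).
Definition hsub {H : RHilbert} (x y : H) : H := hadd H x (hopp H y).

Definition dense_subspace {H : RHilbert} (D : H -> Prop) : Prop :=
  D (hzero H) /\
  (forall x y, D x -> D y -> D (hadd H x y)) /\
  (forall a x, D x -> D (hscal H a x)) /\
  (forall x eps, eps > 0 -> exists y, D y /\ hnorm (hsub x y) < eps).

Definition C1_real (Phi : R -> R) : Prop :=
  exists Phi' : R -> R, (forall t, derivable_pt_lim Phi t (Phi' t)) /\ continuity Phi'.

Definition C1_H {H : RHilbert} (h : R -> H) : Prop :=
  exists h' : R -> H,
    (forall t eps, eps > 0 -> exists delta, delta > 0 /\ forall s, s <> 0 -> Rabs s < delta ->
        hnorm (hsub (hscal H (/ s) (hsub (h (t + s)) (h t))) (h' t)) < eps) /\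
    (forall t eps, eps > 0 -> exists delta, delta > 0 /\ forall s, Rabs (s - t) < delta ->
        hnorm (hsub (h' s) (h' t)) < eps).

Definition periodic {A : Type} (T : R) (g : R -> A) : Prop := forall t, g (t + T) = g t.

Fixpoint fsum (N : nat) (g : nat -> R) : R :=
  match N with O => 0 | S n => fsum n g + g n end.

(* The set K: real parts of complex linear combinations
   sum_k (a_k + i b_k) Phi_k(t) e^{i <x, h_k(t)>}, written out:
   Re((a + i b) Phi e^{i th}) = Phi (a cos th - b sin th). *)
Definition inK {H : RHilbert} (DA : H -> Prop) (T : R) (u : R -> H -> R) : Prop :=
  exists (N : nat) (a b : nat -> R) (Phi : nat -> R -> R) (h : nat -> R -> H),
    (forall k, (k < N)%nat ->
       C1_real (Phi k) /\ periodic T (Phi k) /\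
       C1_H (h k) /\ periodic T (h k) /\ (forall t, DA (h k t))) /\
    (forall t x, u t x =
       fsum N (fun k => Phi k t * (a k * cos (hinner H x (h k t))
                                  - b k * sin (hinner H x (h k t))))).

Definition Cb_star {H : RHilbert} (T : R) (f : R -> H -> R) : Prop :=
  (forall t x eps, eps > 0 -> exists delta, delta > 0 /\ forall s y,
      Rabs (s - t) < delta -> hnorm (hsub y x) < delta -> Rabs (f s y - f t x) < eps) /\
  (exists M, forall t x, Rabs (f t x) <= M) /\
  (forall t x, f (t + T) x = f t x).

Definition is_sup_abs {H : RHilbert} (g : R -> H -> R) (S : R) : Prop :=
  is_lub (fun y => exists t x, y = Rabs (g t x)) S.

From Stdlib Require Import Reals Lra Lia ZArith Wf_nat Classical IndefiniteDescription Cantor.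
Open Scope R_scope.

(** Gram-Schmidt applied to a dense
    sequence [a] of [D(A^* )] gives an orthonormal-or-zero family [gs] in
    [D(A^* )] whose spans approximate every [x]. At level [n] the point
    [(t, x)] is encoded by [n + 1] angles: [2 pi t / T] and the rescaled
    coordinates [pi <x, gs i> / (n + 1) + pi]. Each angle is spread over an
    [N]-point grid of the circle by the trigonometric kernel
    [((1 + cos u) / 2) ^ m] (with [N = m + 1], so its grid sums are constant),
    and [approx n] is the resulting weighted mean of the values of [f] at the
    grid points. Hence
    - [approx n] is a product of [C^1] periodic kernels in [t] and
      trigonometric polynomials in [<x, h>] with [h] in [D(A^* )], so it lies in [K];
    - as a mean of values of [f], [|approx n| <= S <= 1 + S];
    - grid points near [(t, x)] give values close to [f t x] by continuity,
      while the kernel puts weight [O(N q^m)], [q < 1], on far nodes; choosing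
      the degree [m] large at each level yields pointwise convergence. *)

Lemma fsum_ext N g h : (forall i, (i < N)%nat -> g i = h i) -> fsum N g = fsum N h.
Proof.
  induction N as [|N IH]; intros E; simpl; auto.
  rewrite IH, E by (intros; try apply E; lia); reflexivity.
Qed.

Lemma fsum_plus N g h : fsum N (fun i => g i + h i) = fsum N g + fsum N h.
Proof. induction N as [|N IH]; simpl; [lra|]. rewrite IH; lra. Qed.

Lemma fsum_scal N c g : fsum N (fun i => c * g i) = c * fsum N g.
Proof. induction N as [|N IH]; simpl; [lra|]. rewrite IH; lra. Qed.

Lemma fsum_const N c : fsum N (fun _ => c) = INR N * c.
Proof. induction N as [|N IH]; simpl fsum; [simpl; lra|]. rewrite IH, S_INR; lra. Qed.

Lemma fsum_le N g h : (forall i, (i < N)%nat -> g i <= h i) -> fsum N g <= fsum N h.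
Proof.
  induction N as [|N IH]; intros Hle; simpl; [lra|].
  pose proof (IH (fun i Hi => Hle i ltac:(lia))). pose proof (Hle N ltac:(lia)). lra.
Qed.

Lemma fsum_nonneg N g : (forall i, (i < N)%nat -> 0 <= g i) -> 0 <= fsum N g.
Proof.
  intros Hg. replace 0 with (fsum N (fun _ => 0)) by (rewrite fsum_const; ring).
  apply fsum_le; auto.
Qed.

Lemma fsum_abs N g : Rabs (fsum N g) <= fsum N (fun i => Rabs (g i)).
Proof.
  induction N as [|N IH]; simpl; [rewrite Rabs_R0; lra|].
  eapply Rle_trans; [apply Rabs_triang|]. lra.
Qed.

Lemma fsum_single N g i : (i < N)%nat ->
  (forall l, (l < N)%nat -> l <> i -> g l = 0) -> fsum N g = g i.
Proof.
  induction N as [|N IH]; intros Hi Hz; [lia|]. simpl. destruct (Nat.eq_dec i N) as [->|Hne].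
  - rewrite (fsum_ext N g (fun _ => 0)), fsum_const by (intros; apply Hz; lia). ring.
  - rewrite IH, (Hz N) by (auto; lia). ring.
Qed.

Lemma fsum_le_term N g i : (i < N)%nat -> (forall l, (l < N)%nat -> 0 <= g l) -> g i <= fsum N g.
Proof.
  induction N as [|N IH]; intros Hi Hg; [lia|]. simpl.
  pose proof (Hg N ltac:(lia)). destruct (Nat.eq_dec i N) as [->|Hne].
  - pose proof (fsum_nonneg N g (fun l Hl => Hg l ltac:(lia))). lra.
  - pose proof (IH ltac:(lia) (fun l Hl => Hg l ltac:(lia))). lra.
Qed.

Lemma fsum_mono_N N M g : (N <= M)%nat -> (forall l, (l < M)%nat -> 0 <= g l) ->
  fsum N g <= fsum M g.
Proof.
  induction 1 as [|M HNM IH]; intros Hg; [lra|]. simpl.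
  pose proof (Hg M ltac:(lia)). pose proof (IH (fun l Hl => Hg l ltac:(lia))). lra.
Qed.

Lemma fsum_app N1 N2 g : fsum (N1 + N2) g = fsum N1 g + fsum N2 (fun k => g (N1 + k)%nat).
Proof.
  induction N2 as [|N2 IH]; simpl; [rewrite Nat.add_0_r; lra|].
  rewrite Nat.add_succ_r; simpl. rewrite IH; lra.
Qed.

Lemma fsum_telescope N G : fsum N (fun j => G j - G (S j)) = G O - G N.
Proof. induction N as [|N IH]; simpl; [lra|]. rewrite IH; lra. Qed.

Fixpoint fprod (d : nat) (g : nat -> R) : R :=
  match d with O => 1 | S d => fprod d g * g d end.

Lemma fprod_ext d g h : (forall i, (i < d)%nat -> g i = h i) -> fprod d g = fprod d h.
Proof.
  induction d as [|d IH]; intros E; simpl; auto.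
  rewrite IH, E by (intros; try apply E; lia); reflexivity.
Qed.

Lemma fprod_nonneg d g : (forall i, (i < d)%nat -> 0 <= g i) -> 0 <= fprod d g.
Proof.
  induction d as [|d IH]; intros Hg; simpl; [lra|].
  apply Rmult_le_pos; [apply IH; intros|]; apply Hg; lia.
Qed.

Lemma fprod_one d g : (forall i, (i < d)%nat -> g i = 1) -> fprod d g = 1.
Proof. intros Hg. induction d as [|d IH]; simpl; auto. rewrite IH, Hg by (intros; try apply Hg; lia). ring. Qed.

Lemma fprod_mark d g i0 c : (i0 < d)%nat ->
  fprod d (fun l => g l * (if Nat.eqb l i0 then c else 1)) = fprod d g * c.
Proof.
  induction d as [|d IH]; intros Hi; [lia|]. simpl. destruct (Nat.eqb_spec d i0) as [<-|Hne].
  - rewrite (fprod_ext _ _ g); [ring|]. intros i Hid. destruct (Nat.eqb_spec i d); [lia|ring].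
  - rewrite IH by lia. ring.
Qed.

(** [msum N d F] sums [F J] over all multi-indices [J] with [J i < N] for
    [i < d] (and [J i = 0] beyond); [upd J d j] sets coordinate [d] to [j]. *)
Definition upd (J : nat -> nat) (d j : nat) : nat -> nat :=
  fun i => if Nat.eqb i d then j else J i.

Fixpoint msum (N d : nat) (F : (nat -> nat) -> R) : R :=
  match d with
  | O => F (fun _ => O)
  | S d => fsum N (fun j => msum N d (fun J => F (upd J d j)))
  end.

Lemma msum_ext N d F G : (forall J, F J = G J) -> msum N d F = msum N d G.
Proof. revert F G; induction d; simpl; intros F G E; auto. apply fsum_ext; auto. Qed.

Lemma msum_le N d F G :
  (forall J, (forall i, (i < d)%nat -> (J i < N)%nat) -> F J <= G J) -> msum N d F <= msum N d G.
Proof.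
  revert F G; induction d as [|d IH]; simpl; intros F G Hle; [apply Hle; intros; lia|].
  apply fsum_le; intros j Hj. apply IH; intros J HJ. apply Hle. intros i Hi. unfold upd.
  destruct (Nat.eqb_spec i d); auto. apply HJ; lia.
Qed.

Lemma msum_plus N d F G : msum N d (fun J => F J + G J) = msum N d F + msum N d G.
Proof. revert F G; induction d; simpl; intros; auto. rewrite <- fsum_plus. apply fsum_ext; auto. Qed.

Lemma msum_scal N d c F : msum N d (fun J => c * F J) = c * msum N d F.
Proof. revert F; induction d; simpl; intros; auto. rewrite <- fsum_scal. apply fsum_ext; auto. Qed.

Lemma msum_abs N d F : Rabs (msum N d F) <= msum N d (fun J => Rabs (F J)).
Proof.
  revert F; induction d; simpl; intros F; [lra|].
  eapply Rle_trans; [apply fsum_abs|]. apply fsum_le; auto.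
Qed.

Lemma msum_fsum N d M (G : nat -> (nat -> nat) -> R) :
  msum N d (fun J => fsum M (fun i => G i J)) = fsum M (fun i => msum N d (G i)).
Proof.
  induction M as [|M IH]; simpl.
  - clear. induction d; simpl; auto. rewrite (fsum_ext _ _ (fun _ => 0)), fsum_const by auto. ring.
  - rewrite msum_plus, IH. reflexivity.
Qed.

Lemma msum_prod N d w :
  msum N d (fun J => fprod d (fun i => w i (J i))) = fprod d (fun i => fsum N (w i)).
Proof.
  revert w. induction d as [|d IH]; intros w; simpl; auto.
  transitivity (fsum N (fun j => msum N d (fun J => fprod d (fun i => w i (J i))) * w d j)).
  - apply fsum_ext; intros j Hj. rewrite Rmult_comm, <- msum_scal. apply msum_ext; intros J.
    simpl. unfold upd at 2. rewrite Nat.eqb_refl, (fprod_ext d _ (fun i => w i (J i))); [ring|].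
    intros i Hi. unfold upd. destruct (Nat.eqb_spec i d); [lia|auto].
  - rewrite IH, <- fsum_scal. apply fsum_ext; intros; ring.
Qed.

Lemma msum_marginal N d w g i0 : (i0 < d)%nat ->
  (forall i, (i < d)%nat -> fsum N (w i) = 1) ->
  msum N d (fun J => fprod d (fun i => w i (J i)) * g (J i0)) = fsum N (fun j => w i0 j * g j).
Proof.
  intros Hi0 Hw.
  set (w' := fun i j => w i j * (if Nat.eqb i i0 then g j else 1)).
  rewrite (msum_ext _ _ _ (fun J => fprod d (fun i => w' i (J i)))).
  2:{ intros J. unfold w'. symmetry.
      rewrite (fprod_ext d _ (fun i => w i (J i) * (if Nat.eqb i i0 then g (J i0) else 1))).
      - apply fprod_mark; auto.
      - intros i Hi. destruct (Nat.eqb_spec i i0) as [->|]; reflexivity. }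
  rewrite msum_prod.
  rewrite (fprod_ext d _ (fun i => 1 * (if Nat.eqb i i0 then fsum N (fun j => w i0 j * g j) else 1))).
  - rewrite fprod_mark, fprod_one by auto. ring.
  - intros i Hi. unfold w'. destruct (Nat.eqb_spec i i0) as [->|]; [ring|].
    rewrite (fsum_ext _ _ (w i)), Hw by (auto; intros; ring). ring.
Qed.

(** * The trigonometric kernel [((1 + cos u) / 2) ^ m] *)

Inductive trig_poly (m : nat) : (R -> R) -> Prop :=
| tp_cos k a p : (k <= m)%nat -> trig_poly m (fun u => a * cos (INR k * u + p))
| tp_add f g : trig_poly m f -> trig_poly m g -> trig_poly m (fun u => f u + g u)
| tp_ext f g : trig_poly m f -> (forall u, f u = g u) -> trig_poly m g.

Lemma trig_poly_mul_step m f : trig_poly m f -> trig_poly (S m) (fun u => f u * ((1 + cos u) / 2)).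
Proof.
  induction 1 as [k a p Hk| f g _ IHf _ IHg| f g _ IH E].
  - destruct k as [|k].
    + eapply tp_ext; [apply tp_add; [apply (tp_cos _ 0 (a / 2) p)|apply (tp_cos _ 1 (a / 2 * cos p) 0)]; lia|].
      intros u. rewrite INR_0, Rmult_0_l, Rplus_0_l. simpl INR. rewrite Rmult_1_l, Rplus_0_r. field.
    + eapply tp_ext.
      { apply tp_add; [apply tp_add|].
        - apply (tp_cos _ (S k) (a / 2) p); lia.
        - apply (tp_cos _ (S (S k)) (a / 4) p); lia.
        - apply (tp_cos _ k (a / 4) p); lia. }
      intros u. rewrite !S_INR.
      replace ((INR k + 1 + 1) * u + p) with (((INR k + 1) * u + p) + u) by ring.
      replace (INR k * u + p) with (((INR k + 1) * u + p) - u) by ring.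
      set (X := (INR k + 1) * u + p). rewrite cos_plus, cos_minus. field.
  - eapply tp_ext; [apply (tp_add _ _ _ IHf IHg)|]. intros; cbv beta; ring.
  - eapply tp_ext; [apply IH|]. intros u; cbv beta. rewrite E; reflexivity.
Qed.

Definition kern (m : nat) (u : R) : R := ((1 + cos u) / 2) ^ m.

Lemma kern_trig_poly m : trig_poly m (kern m).
Proof.
  induction m as [|m IH].
  - eapply tp_ext; [apply (tp_cos 0 0 1 0); lia|]. intros u. unfold kern. simpl. rewrite Rmult_0_l, Rplus_0_l, cos_0. ring.
  - eapply tp_ext; [apply trig_poly_mul_step, IH|]. intros u. unfold kern. simpl. ring.
Qed.

Lemma kern_bounds m u : 0 <= kern m u <= 1.
Proof.
  unfold kern. pose proof (COS_bound u). split; [apply pow_le; lra|].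
  apply Rle_trans with (1 ^ m); [apply pow_incr; split; lra|rewrite pow1; lra].
Qed.

Lemma kern_far m u dl : cos u <= cos dl -> kern m u <= ((1 + cos dl) / 2) ^ m.
Proof. intros Hc. unfold kern. apply pow_incr. pose proof (COS_bound u). split; lra. Qed.

Definition grid (N j : nat) : R := 2 * PI * INR j / INR N.

Lemma grid_bounds N j : (j < N)%nat -> 0 <= grid N j < 2 * PI.
Proof.
  intros Hj. unfold grid. pose proof PI_RGT_0.
  assert (0 < INR N) by (apply lt_0_INR; lia).
  assert (INR j < INR N) by (apply lt_INR; lia). pose proof (pos_INR j). split.
  - apply Rmult_le_pos; [nra|left; apply Rinv_0_lt_compat; lra].
  - apply Rmult_lt_reg_r with (INR N); auto. unfold Rdiv. rewrite Rmult_assoc, Rinv_l by lra. nra.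
Qed.

(** The grid sum of a nontrivial frequency vanishes (telescoping with
    [2 sin(b/2) cos(X) = sin(X + b/2) - sin(X - b/2)]). *)
Lemma cos_grid_sum_zero N k A : (1 <= k < N)%nat ->
  fsum N (fun j => cos (A - INR j * (2 * PI * INR k / INR N))) = 0.
Proof.
  intros Hk. set (b := 2 * PI * INR k / INR N). pose proof PI_RGT_0.
  assert (HN : 0 < INR N) by (apply lt_0_INR; lia).
  assert (Hkn : INR k < INR N) by (apply lt_INR; lia).
  assert (Hk0 : 0 < INR k) by (apply lt_0_INR; lia).
  assert (Hs : sin (b / 2) <> 0).
  { apply Rgt_not_eq, sin_gt_0.
    - unfold b. apply Rdiv_lt_0_compat; [apply Rdiv_lt_0_compat|]; nra.
    - unfold b. apply Rmult_lt_reg_r with (INR N); auto.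
      replace (2 * PI * INR k / INR N / 2 * INR N) with (PI * INR k) by (field; lra). nra. }
  set (G := fun j => sin (A + b / 2 - INR j * b)).
  assert (E : forall j, 2 * sin (b / 2) * cos (A - INR j * b) = G j - G (S j)).
  { intros j. unfold G. rewrite S_INR.
    replace (A + b / 2 - (INR j + 1) * b) with ((A - INR j * b) - b / 2) by field.
    replace (A + b / 2 - INR j * b) with ((A - INR j * b) + b / 2) by ring.
    set (X := A - INR j * b). rewrite sin_plus, sin_minus. ring. }
  assert (Hsum : 2 * sin (b / 2) * fsum N (fun j => cos (A - INR j * b)) = 0).
  { rewrite <- fsum_scal, (fsum_ext _ _ (fun j => G j - G (S j))), fsum_telescope by auto.
    unfold G. simpl INR. rewrite <- (sin_period (A + b / 2 - INR N * b) k).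
    replace (A + b / 2 - INR N * b + 2 * INR k * PI) with (A + b / 2 - 0 * b) by (unfold b; field; lra).
    ring. }
  apply Rmult_integral in Hsum as [Hz|Hz]; auto. lra.
Qed.

Lemma trig_poly_grid_invariant m N f th : (m < N)%nat -> trig_poly m f ->
  fsum N (fun j => f (th - grid N j)) = fsum N (fun j => f (0 - grid N j)).
Proof.
  intros HmN Hf. revert th. induction Hf as [k a p Hk| f g _ IHf _ IHg| f g _ IH E]; intros th.
  - assert (HN : 0 < INR N) by (apply lt_0_INR; lia).
    destruct k as [|k].
    + apply fsum_ext; intros; simpl INR; rewrite !Rmult_0_l; reflexivity.
    + assert (Hz : forall s, fsum N (fun j => a * cos (INR (S k) * (s - grid N j) + p)) = 0).
      { intros s. rewrite fsum_scal.
        rewrite (fsum_ext _ _ (fun j => cos ((INR (S k) * s + p) - INR j * (2 * PI * INR (S k) / INR N)))).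
        - rewrite cos_grid_sum_zero by lia. ring.
        - intros j _. unfold grid. f_equal. field. lra. }
      rewrite !Hz. reflexivity.
  - rewrite !fsum_plus, IHf, IHg. reflexivity.
  - rewrite <- !(fsum_ext _ _ _ (fun j _ => E (_ - grid N j))). apply IH.
Qed.

Definition kern_mass (m : nat) : R := fsum (S m) (fun j => kern m (0 - grid (S m) j)).

Lemma kern_grid_sum m th : fsum (S m) (fun j => kern m (th - grid (S m) j)) = kern_mass m.
Proof. apply (trig_poly_grid_invariant m); [lia|apply kern_trig_poly]. Qed.

Lemma kern_mass_ge1 m : 1 <= kern_mass m.
Proof.
  unfold kern_mass. eapply Rle_trans; [|apply (fsum_le_term _ _ O); [lia|intros; apply kern_bounds]].
  unfold kern, grid. simpl INR. unfold Rdiv at 2. rewrite !Rmult_0_r, Rmult_0_l, Rminus_0_r, cos_0.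
  replace ((1 + 1) / 2) with 1 by field. rewrite pow1. lra.
Qed.

Lemma cos_Zperiod x k : cos (x + 2 * IZR k * PI) = cos x.
Proof.
  destruct (Z_le_gt_dec 0 k).
  - rewrite <- (Z2Nat.id k), <- INR_IZR_INZ by auto. apply cos_period.
  - rewrite <- (cos_period _ (Z.to_nat (- k))), INR_IZR_INZ, Z2Nat.id, opp_IZR by lia.
    f_equal; ring.
Qed.

Lemma cos_near r dl : 0 < dl < PI -> cos r > cos dl ->
  exists k : Z, Rabs (r - 2 * PI * IZR k) < dl.
Proof.
  intros Hd Hc. pose proof PI_RGT_0.
  set (x := r / (2 * PI) + / 2). destruct (archimed x) as [H1 H2].
  exists (up x - 1)%Z. rewrite minus_IZR. set (n := IZR (up x)) in *.
  set (y := r - 2 * PI * (n - 1)).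
  assert (Hy : - PI <= y <= PI).
  { unfold x in *. unfold y. split.
    - apply Rmult_le_compat_l with (r := 2 * PI) in H2; [|lra].
      replace (2 * PI * (n - (r / (2 * PI) + / 2))) with (2 * PI * n - r - PI) in H2 by (field; lra). nra.
    - apply Rmult_lt_compat_l with (r := 2 * PI) in H1; [|lra].
      replace (2 * PI * (r / (2 * PI) + / 2)) with (r + PI) in H1 by (field; lra). lra. }
  assert (Hcy : cos y = cos r).
  { unfold y. replace (r - 2 * PI * (n - 1)) with (r + 2 * IZR (- (up x - 1)) * PI).
    - apply cos_Zperiod.
    - rewrite opp_IZR, minus_IZR. fold n. ring. }
  assert (Habs : cos (Rabs y) = cos y).
  { destruct (Rcase_abs y); [rewrite Rabs_left, cos_neg|rewrite Rabs_right]; auto. }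
  destruct (Rlt_or_le (Rabs y) dl) as [Hlt|Hle]; auto. exfalso.
  assert (cos (Rabs y) <= cos dl).
  { destruct Hle as [Hlt|Heq]; [|rewrite Heq; lra].
    left. apply cos_decreasing_1; try lra; apply Rabs_le in Hy; lra. }
  lra.
Qed.

Lemma no_winding (z g d : R) (k : Z) : PI / 2 < z < 3 * PI / 2 -> 0 <= g < 2 * PI ->
  0 < d <= PI / 4 -> Rabs (z - g - 2 * PI * IZR k) < d -> k = 0%Z.
Proof.
  intros Hz Hg Hd Hk. pose proof PI_RGT_0. apply Rabs_def2 in Hk as [Hk1 Hk2].
  assert (A1 : IZR k < 1) by (apply Rmult_lt_reg_l with (2 * PI); lra).
  assert (A2 : -1 < IZR k) by (apply Rmult_lt_reg_l with (2 * PI); lra).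
  apply lt_IZR in A1. apply lt_IZR in A2. lia.
Qed.

Definition eventually (P : nat -> Prop) : Prop := exists n0, forall n, (n >= n0)%nat -> P n.

Lemma eventually_and (P Q : nat -> Prop) :
  eventually P -> eventually Q -> eventually (fun n => P n /\ Q n).
Proof.
  intros [n1 H1] [n2 H2]. exists (Nat.max n1 n2). intros n Hn. split; [apply H1|apply H2]; lia.
Qed.

Lemma eventually_gt_INR (K : R) : eventually (fun n => K < INR n).
Proof.
  destruct (archimed K) as [HK _]. exists (Z.to_nat (up K)). intros n Hn.
  apply Rlt_le_trans with (IZR (up K)); [lra|].
  destruct (Z_le_gt_dec 0 (up K)) as [Hup|Hup].
  - rewrite <- (Z2Nat.id (up K)), <- INR_IZR_INZ by lia. apply le_INR. lia.
  - apply Rle_trans with 0; [apply IZR_le; lia|apply pos_INR].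
Qed.

Lemma eventually_div_small (c e : R) : 0 < e -> eventually (fun n => c / (INR n + 1) < e).
Proof.
  intros He. destruct (eventually_gt_INR (c / e)) as [n0 Hn0]. exists n0. intros n Hn.
  pose proof (Hn0 n Hn) as Hc. pose proof (pos_INR n).
  apply Rmult_lt_reg_r with (INR n + 1); [lra|]. unfold Rdiv. rewrite Rmult_assoc, Rinv_l by lra.
  apply Rmult_lt_compat_r with (r := e) in Hc; [|lra]. unfold Rdiv in Hc.
  rewrite Rmult_assoc, Rinv_l in Hc by lra. nra.
Qed.

Lemma bernoulli2 a m : 0 <= a -> 1 + INR m * a + INR m * (INR m - 1) / 2 * a ^ 2 <= (1 + a) ^ m.
Proof.
  intros Ha. induction m as [|m IH]; [simpl; lra|]. rewrite S_INR. simpl pow.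
  assert (0 <= INR m) by apply pos_INR.
  assert (0 <= INR m * (INR m - 1) / 2 * a ^ 2 * a).
  { destruct m; [simpl; lra|]. rewrite S_INR. pose proof (pos_INR m).
    apply Rmult_le_pos; [apply Rmult_le_pos|]; simpl; nra. }
  nra.
Qed.

Lemma geometric_small q e : 0 < q < 1 -> 0 < e -> exists m : nat, INR (S m) * q ^ m <= e.
Proof.
  intros Hq He. set (a := / q - 1).
  assert (Ha : 0 < a) by (unfold a; apply Rlt_0_minus; rewrite <- Rinv_1; apply Rinv_lt_contravar; lra).
  assert (Ha2 : 0 < a ^ 2) by (apply pow_lt; lra).
  destruct (eventually_gt_INR (6 / (e * a ^ 2))) as [M HM]. specialize (HM M (le_n M)).
  exists (S (S M)).
  pose proof (bernoulli2 a (S (S M)) ltac:(lra)) as Hb. rewrite !S_INR in *.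
  replace (1 + a) with (/ q) in Hb by (unfold a; ring). rewrite pow_inv in Hb.
  assert (HP : 0 < q ^ S (S M)) by (apply pow_lt; lra).
  pose proof (pos_INR M). set (P := q ^ S (S M)) in *.
  assert (Hquad : P * ((INR M + 2) * (INR M + 1) * a ^ 2) <= 2).
  { assert (Hb' : (INR M + 1 + 1) * (INR M + 1) / 2 * a ^ 2 <= / P) by nra.
    apply Rmult_le_compat_l with (r := P) in Hb'; [|lra]. rewrite Rinv_r in Hb'; lra. }
  assert (HMe : 6 < INR M * (e * a ^ 2)).
  { apply Rmult_lt_compat_r with (r := e * a ^ 2) in HM; [|nra].
    unfold Rdiv in HM. rewrite Rmult_assoc, Rinv_l in HM; nra. }
  assert ((INR M + 3) * 6 <= e * ((INR M + 2) * (INR M + 1) * a ^ 2)) by nra.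
  nra.
Qed.

(** * Hilbert-space geometry *)

Section Hilbert.
Variable H : RHilbert.

Notation "<< x , y >>" := (hinner H x y).

Definition sqdist (x y : H) : R := << hsub x y, hsub x y >>.

Lemma inner_add_r x y z : << x, hadd H y z >> = << x, y >> + << x, z >>.
Proof. rewrite hinner_sym, hinner_add_l, !(hinner_sym H x). reflexivity. Qed.

Lemma inner_scal_r c x y : << x, hscal H c y >> = c * << x, y >>.
Proof. rewrite hinner_sym, hinner_scal_l, (hinner_sym H x). reflexivity. Qed.

Lemma inner_zero_l y : << hzero H, y >> = 0.
Proof. pose proof (hinner_add_l H (hzero H) (hzero H) y) as E. rewrite hadd_zero in E. lra. Qed.

Lemma inner_zero_r y : << y, hzero H >> = 0.
Proof. rewrite hinner_sym; apply inner_zero_l. Qed.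

Lemma inner_sub_l x y z : << hsub x y, z >> = << x, z >> - << y, z >>.
Proof.
  unfold hsub. rewrite hinner_add_l.
  pose proof (hinner_add_l H y (hopp H y) z) as E. rewrite hadd_opp, inner_zero_l in E. lra.
Qed.

Lemma inner_sub_r x y z : << z, hsub x y >> = << z, x >> - << z, y >>.
Proof. rewrite hinner_sym, inner_sub_l, !(hinner_sym H _ z). reflexivity. Qed.

Lemma inner_null x y : << x, x >> = 0 -> << x, y >> = 0.
Proof. intros Hx. apply hinner_def in Hx as ->. apply inner_zero_l. Qed.

(** [sqdist x z <= 2 sqdist x y + 2 sqdist y z] (parallelogram law). *)
Lemma sqdist_triangle x y z : sqdist x z <= 2 * sqdist x y + 2 * sqdist y z.
Proof.
  unfold sqdist. pose proof (hinner_pos H (hsub (hsub x y) (hsub y z))).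
  rewrite !inner_sub_l, !inner_sub_r in *.
  pose proof (hinner_sym H x y). pose proof (hinner_sym H x z). pose proof (hinner_sym H y z). lra.
Qed.

Lemma sqdist_of_norm v w r : hnorm (hsub v w) < r -> sqdist v w < r ^ 2.
Proof.
  unfold hnorm, sqdist. intros Hv. pose proof (hinner_pos H (hsub v w)).
  rewrite <- (sqrt_sqrt (<< hsub v w, hsub v w >>)) by auto. pose proof (sqrt_pos (<< hsub v w, hsub v w >>)). simpl. nra.
Qed.

Lemma norm_of_sqdist v w r : 0 < r -> sqdist v w < r ^ 2 -> hnorm (hsub v w) < r.
Proof.
  unfold hnorm, sqdist. intros Hr Hv. rewrite <- (sqrt_pow2 r) by lra.
  apply sqrt_lt_1; [apply hinner_pos|apply pow2_ge_0|exact Hv].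
Qed.

Fixpoint vsum (n : nat) (g : nat -> H) : H :=
  match n with O => hzero H | S n => hadd H (vsum n g) (g n) end.

Lemma inner_vsum_l n g y : << vsum n g, y >> = fsum n (fun i => << g i, y >>).
Proof. induction n as [|n IH]; simpl; [apply inner_zero_l|]. rewrite hinner_add_l, IH. reflexivity. Qed.

Lemma vsum_ext n g h : (forall i, (i < n)%nat -> g i = h i) -> vsum n g = vsum n h.
Proof.
  induction n as [|n IH]; intros E; simpl; auto.
  rewrite IH, E by (intros; try apply E; lia). reflexivity.
Qed.

(** [gs i] is [a i] minus its projection onto [gs 0, ..., gs (i-1)],
    normalised; it is a unit vector, or zero when [a i] depends linearly
    on [a 0, ..., a (i-1)]. *)
Variable a : nat -> H.

Definition coord_proj (e : nat -> H) (n : nat) (y : H) : H :=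
  vsum n (fun i => hscal H (<< y, e i >>) (e i)).

Definition normalize (w : H) : H := hscal H (/ hnorm w) w.

Fixpoint gs_stage (n : nat) : nat -> H :=
  match n with
  | O => fun _ => hzero H
  | S n => fun i => if Nat.eqb i n
                    then normalize (hsub (a n) (coord_proj (gs_stage n) n (a n)))
                    else gs_stage n i
  end.

Definition gs (i : nat) : H := gs_stage (S i) i.

Definition Pn (n : nat) (y : H) : H := coord_proj gs n y.

Lemma gs_stage_gs n i : (i < n)%nat -> gs_stage n i = gs i.
Proof.
  induction n as [|n IH]; intros Hi; [lia|]. simpl. destruct (Nat.eqb_spec i n) as [->|].
  - unfold gs. simpl. rewrite Nat.eqb_refl. reflexivity.
  - apply IH; lia.
Qed.

Lemma gs_def n : gs n = normalize (hsub (a n) (Pn n (a n))).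
Proof.
  unfold gs. simpl. rewrite Nat.eqb_refl. unfold Pn, coord_proj. do 2 f_equal.
  apply vsum_ext; intros. rewrite gs_stage_gs; auto.
Qed.

Lemma normalize_inner w y : << normalize w, y >> = / hnorm w * << w, y >>.
Proof. apply hinner_scal_l. Qed.

Definition gs_sq (i : nat) : R := << gs i, gs i >>.

Lemma gs_sq_01 i : gs_sq i = 0 \/ gs_sq i = 1.
Proof.
  unfold gs_sq. rewrite gs_def. set (w := hsub (a i) (Pn i (a i))).
  rewrite normalize_inner. unfold normalize. rewrite inner_scal_r. unfold hnorm.
  destruct (Req_dec (<< w, w >>) 0) as [Hw|Hw]; [left; rewrite Hw; ring|right].
  pose proof (hinner_pos H w). pose proof (sqrt_lt_R0 (<< w, w >>) ltac:(lra)).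
  replace (/ sqrt (<< w, w >>) * (/ sqrt (<< w, w >>) * << w, w >>))
    with (<< w, w >> / (sqrt (<< w, w >>) * sqrt (<< w, w >>))) by (field; lra).
  rewrite sqrt_sqrt by lra. field; auto.
Qed.

(** A coordinate along a zero vector [gs i] vanishes. *)
Lemma coord_gs_sq y i : << y, gs i >> * gs_sq i = << y, gs i >>.
Proof.
  destruct (gs_sq_01 i) as [E|E]; rewrite E; [|ring].
  rewrite hinner_sym, inner_null by auto. ring.
Qed.

Lemma gs_orthogonal n : forall i j, (i < n)%nat -> (j < n)%nat -> i <> j -> << gs i, gs j >> = 0.
Proof.
  induction n as [|n IH]; [intros; lia|].
  assert (Hn : forall i, (i < n)%nat -> << gs n, gs i >> = 0).
  { intros i Hi. rewrite gs_def, normalize_inner, inner_sub_l. unfold Pn, coord_proj.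
    rewrite inner_vsum_l, (fsum_ext _ _ (fun l => << a n, gs l >> * << gs l, gs i >>))
      by (intros; apply hinner_scal_l).
    rewrite (fsum_single _ _ i), coord_gs_sq; auto; [ring|].
    intros l Hl Hli. rewrite IH by lia. ring. }
  intros i j Hi Hj Hij. destruct (Nat.eq_dec i n) as [->|]; destruct (Nat.eq_dec j n) as [->|]; try lia.
  - apply Hn; lia.
  - rewrite hinner_sym. apply Hn; lia.
  - apply IH; lia.
Qed.

Definition comb (n : nat) (c : nat -> R) : H := vsum n (fun i => hscal H (c i) (gs i)).

Lemma Pn_comb n y : Pn n y = comb n (fun i => << y, gs i >>).
Proof. reflexivity. Qed.

Lemma comb_inner_l n c y : << comb n c, y >> = fsum n (fun i => c i * << gs i, y >>).
Proof. unfold comb. rewrite inner_vsum_l. apply fsum_ext; intros. apply hinner_scal_l. Qed.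

Lemma comb_inner n c d : << comb n c, comb n d >> = fsum n (fun i => c i * d i * gs_sq i).
Proof.
  rewrite comb_inner_l. apply fsum_ext; intros i Hi. rewrite hinner_sym, comb_inner_l.
  rewrite (fsum_single _ _ i); auto.
  - unfold gs_sq; ring.
  - intros l Hl Hli. rewrite (gs_orthogonal n) by auto. ring.
Qed.

Lemma sqdist_comb n c y : sqdist (comb n c) y =
  sqdist y (Pn n y) + fsum n (fun i => (c i * gs_sq i - << y, gs i >>) ^ 2).
Proof.
  assert (Hsym : forall u v, << u, v >> = << v, u >>) by apply hinner_sym.
  assert (E1 : << comb n c, comb n c >> = fsum n (fun i => c i * c i * gs_sq i)) by apply comb_inner.
  assert (E2 : << comb n c, y >> = fsum n (fun i => c i * << y, gs i >>)).
  { rewrite comb_inner_l. apply fsum_ext; intros. rewrite Hsym; reflexivity. }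
  assert (E3 : << Pn n y, Pn n y >> = fsum n (fun i => << y, gs i >> * << y, gs i >>)).
  { rewrite Pn_comb. rewrite comb_inner.
    apply fsum_ext; intros. rewrite Rmult_assoc, coord_gs_sq; reflexivity. }
  assert (E4 : << Pn n y, y >> = fsum n (fun i => << y, gs i >> * << y, gs i >>)).
  { rewrite Pn_comb. rewrite comb_inner_l.
    apply fsum_ext; intros. rewrite Hsym; reflexivity. }
  assert (E5 : fsum n (fun i => (c i * gs_sq i - << y, gs i >>) ^ 2) =
               fsum n (fun i => c i * c i * gs_sq i) - 2 * fsum n (fun i => c i * << y, gs i >>)
               + fsum n (fun i => << y, gs i >> * << y, gs i >>)).
  { rewrite (fsum_ext n _ (fun i => c i * c i * gs_sq i + (-2) * (c i * << y, gs i >>)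
                                   + << y, gs i >> * << y, gs i >>)).
    - rewrite !fsum_plus, fsum_scal. ring.
    - intros i _. rewrite <- (coord_gs_sq y i).
      destruct (gs_sq_01 i) as [E|E]; rewrite E; ring. }
  unfold sqdist. rewrite !inner_sub_l, !inner_sub_r, E5, (Hsym y (comb n c)), (Hsym y (Pn n y)). lra.
Qed.

Lemma bessel n y : sqdist y (Pn n y) = << y, y >> - fsum n (fun i => << y, gs i >> ^ 2).
Proof.
  assert (H0 : sqdist (comb n (fun _ => 0)) y = << y, y >>).
  { unfold sqdist. rewrite inner_sub_l, !inner_sub_r, comb_inner, !comb_inner_l,
      (hinner_sym H y), comb_inner_l, !fsum_scal. ring. }
  pose proof (sqdist_comb n (fun _ => 0) y) as E.
  rewrite (fsum_ext n _ (fun i => << y, gs i >> ^ 2)) in E by (intros; ring). lra.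
Qed.

Lemma coord_bound n y i : (i < n)%nat -> << y, gs i >> ^ 2 <= << y, y >>.
Proof.
  intros Hi. pose proof (bessel n y). pose proof (hinner_pos H (hsub y (Pn n y))).
  pose proof (fsum_le_term n (fun i => << y, gs i >> ^ 2) i Hi ltac:(intros; apply pow2_ge_0)).
  unfold sqdist in *. lra.
Qed.

Lemma bessel_full j : fsum (S j) (fun i => << a j, gs i >> ^ 2) = << a j, a j >>.
Proof.
  cbn [fsum]. set (w := hsub (a j) (Pn j (a j))).
  assert (Hw : << w, w >> = << a j, a j >> - fsum j (fun i => << a j, gs i >> ^ 2)) by apply bessel.
  assert (Hwa : << w, a j >> = << w, w >>).
  { unfold w. rewrite !inner_sub_l, !inner_sub_r, (hinner_sym H (a j) (Pn j (a j))).
    enough (<< Pn j (a j), Pn j (a j) >> = << Pn j (a j), a j >>) by lra.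
    rewrite Pn_comb. rewrite comb_inner, comb_inner_l.
    apply fsum_ext; intros. rewrite Rmult_assoc, coord_gs_sq, hinner_sym. reflexivity. }
  enough (<< a j, gs j >> ^ 2 = << w, w >>) by lra.
  rewrite gs_def. fold w. rewrite hinner_sym, normalize_inner, Hwa. unfold hnorm.
  pose proof (hinner_pos H w). destruct (Req_dec (<< w, w >>) 0) as [E|E]; [rewrite E; ring|].
  pose proof (sqrt_lt_R0 (<< w, w >>) ltac:(lra)).
  rewrite Rpow_mult_distr, pow_inv. simpl. rewrite Rmult_1_r, sqrt_sqrt by lra. field. auto.
Qed.

Lemma a_in_span j n : (j < n)%nat -> sqdist (a j) (Pn n (a j)) = 0.
Proof.
  intros Hj. pose proof (hinner_pos H (hsub (a j) (Pn n (a j)))) as Hpos.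
  change (0 <= sqdist (a j) (Pn n (a j))) in Hpos. rewrite bessel in *.
  pose proof (fsum_mono_N (S j) n (fun i => << a j, gs i >> ^ 2) ltac:(lia) ltac:(intros; apply pow2_ge_0)).
  rewrite bessel_full in *. lra.
Qed.

Lemma best_approx j n x : (j < n)%nat -> sqdist x (Pn n x) <= sqdist x (a j).
Proof.
  intros Hj. set (v := Pn n (a j)).
  assert (Hav : forall z, << a j, z >> = << v, z >>).
  { intros z. pose proof (inner_null _ z (a_in_span j n Hj)) as E. rewrite inner_sub_l in E. fold v in E. lra. }
  assert (Hxa : sqdist x (a j) = sqdist v x).
  { unfold sqdist. rewrite !inner_sub_l, !inner_sub_r, !Hav, !(hinner_sym H _ (a j)), !Hav.
    rewrite (hinner_sym H x v). ring. }
  pose proof (sqdist_comb n (fun i => << a j, gs i >>) x) as E.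
  pose proof (fsum_nonneg n (fun i => (<< a j, gs i >> * gs_sq i - << x, gs i >>) ^ 2)
    ltac:(intros; apply pow2_ge_0)).
  change (comb n (fun i => << a j, gs i >>)) with v in E. lra.
Qed.

End Hilbert.

Lemma dense_sequence (H : RHilbert) (DA : H -> Prop) : dense_subspace DA ->
  exists a : nat -> H, (forall j, DA (a j)) /\
    forall x r, r > 0 -> exists j, sqdist H x (a j) < r.
Proof.
  intros [_ [_ [_ Hden]]]. destruct (hseparable H) as [d Hd].
  assert (Hex : forall n k, exists z, DA z /\ hnorm (hsub (d n) z) < / (INR k + 1)).
  { intros. apply Hden. apply Rinv_0_lt_compat. pose proof (pos_INR k); lra. }
  set (b := fun n k => proj1_sig (constructive_indefinite_description _ (Hex n k))).
  assert (Hb : forall n k, DA (b n k) /\ hnorm (hsub (d n) (b n k)) < / (INR k + 1)).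
  { intros. unfold b. destruct constructive_indefinite_description; auto. }
  exists (fun j => b (fst (of_nat j)) (snd (of_nat j))). split; [intros; apply Hb|].
  intros x r Hr. set (s := sqrt r / 2).
  assert (Hs : 0 < s) by (unfold s; pose proof (sqrt_lt_R0 r Hr); lra).
  destruct (eventually_gt_INR (/ s)) as [k Hk]. specialize (Hk k (le_n k)).
  assert (Hks : / (INR k + 1) < s).
  { rewrite <- (Rinv_inv s). apply Rinv_lt_contravar; [|lra].
    pose proof (Rinv_0_lt_compat s Hs). apply Rmult_lt_0_compat; lra. }
  destruct (Hd x s Hs) as [n Hn].
  exists (to_nat (n, k)). rewrite cancel_of_to. cbn [fst snd].
  pose proof (sqdist_triangle H x (d n) (b n k)).
  pose proof (sqdist_of_norm H _ _ _ Hn). destruct (Hb n k) as [_ Hb2].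
  pose proof (sqdist_of_norm H _ _ _ (Rlt_trans _ _ _ Hb2 Hks)).
  assert (4 * s ^ 2 = r).
  { unfold s. simpl. rewrite Rmult_1_r.
    replace (4 * (sqrt r / 2 * (sqrt r / 2))) with (sqrt r * sqrt r) by field. apply sqrt_sqrt; lra. }
  lra.
Qed.

Lemma C1_kern_affine C om g m : C1_real (fun t => C * kern m (om * t - g)).
Proof.
  unfold kern.
  exists (fun t => C * (INR m * (/ 2 * (1 + cos (om * t - g))) ^ pred m) * (- sin (om * t - g) * om / 2)).
  split; [|intros t; reg].
  intros t.
  set (lin := minus_fct (fun t => om * t) (fun _ => g)).
  set (half := mult_real_fct (/ 2) (plus_fct (fun _ => 1) cos)).
  assert (Dlin : derivable_pt_lim lin t (om * 1 - 0)).
  { apply derivable_pt_lim_minus; [apply derivable_pt_lim_scal, derivable_pt_lim_id|apply derivable_pt_lim_const]. }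
  replace (om * 1 - 0) with om in Dlin by ring.
  assert (Dhalf : derivable_pt_lim half (lin t) (/ 2 * (0 + - sin (lin t)))).
  { apply derivable_pt_lim_scal, derivable_pt_lim_plus; [apply derivable_pt_lim_const|apply derivable_pt_lim_cos]. }
  assert (Dpow : derivable_pt_lim (mult_real_fct C (fun y => y ^ m)) (comp half lin t)
                   (C * (INR m * comp half lin t ^ pred m))).
  { apply derivable_pt_lim_scal, derivable_pt_lim_pow. }
  pose proof (derivable_pt_lim_comp _ _ _ _ _ (derivable_pt_lim_comp _ _ _ _ _ Dlin Dhalf) Dpow) as D.
  unfold comp, half, lin, mult_real_fct, plus_fct, minus_fct in D.
  replace (- sin (om * t - g) * om / 2) with (/ 2 * (0 + - sin (om * t - g)) * om) by field.
  eapply derivable_pt_lim_ext; [|exact D].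
  intros z. cbv beta. unfold Rdiv. rewrite (Rmult_comm (1 + cos _)). reflexivity.
Qed.

Section ClassK.
Variables (H : RHilbert) (DA : H -> Prop) (T : R).
Hypothesis HDA : dense_subspace DA.

Notation "<< x , y >>" := (hinner H x y).

Lemma DA_zero : DA (hzero H).
Proof. apply HDA. Qed.

Lemma DA_add x y : DA x -> DA y -> DA (hadd H x y).
Proof. apply HDA. Qed.

Lemma DA_scal c x : DA x -> DA (hscal H c x).
Proof. apply HDA. Qed.

Lemma DA_sub x y : DA x -> DA y -> DA (hsub x y).
Proof.
  intros Hx Hy. unfold hsub.
  replace (hopp H y) with (hscal H (-1) y); [apply DA_add, DA_scal; auto|].
  assert (E : hadd H y (hscal H (-1) y) = hzero H).
  { rewrite <- (hscal_one H y) at 1. rewrite <- hscal_distr_s. replace (1 + -1) with 0 by ring.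
    apply hinner_def. rewrite hinner_scal_l. ring. }
  rewrite <- (hadd_zero H (hscal H (-1) y)), <- (hadd_opp H y), hadd_assoc.
  rewrite (hadd_comm H (hscal H (-1) y) y), E, hadd_comm, hadd_zero. reflexivity.
Qed.

Lemma vsum_DA n g : (forall i, (i < n)%nat -> DA (g i)) -> DA (vsum H n g).
Proof. induction n as [|n IH]; simpl; intros Hg; [apply DA_zero|]. apply DA_add; auto. Qed.

Lemma gs_DA (a : nat -> H) : (forall j, DA (a j)) -> forall i, DA (gs H a i).
Proof.
  intros Ha i. induction i as [i IH] using lt_wf_ind.
  rewrite gs_def. apply DA_scal, DA_sub; auto.
  apply vsum_DA. intros l Hl. apply DA_scal, IH, Hl.
Qed.

Lemma C1_H_const (h : H) : C1_H (fun _ => h).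
Proof.
  assert (Hz : forall v : H, << v, v >> = 0 -> forall ep, ep > 0 -> hnorm v < ep)
    by (intros v E ep Hep; unfold hnorm; rewrite E, sqrt_0; lra).
  exists (fun _ => hzero H). split.
  - intros t ep Hep. exists 1. split; [lra|]. intros s _ _. apply Hz; auto.
    rewrite !inner_sub_l, !inner_sub_r, !hinner_scal_l, !inner_sub_l, !inner_zero_l, !inner_zero_r. ring.
  - intros t ep Hep. exists 1. split; [lra|]. intros s _. apply Hz; auto.
    rewrite inner_sub_l, !inner_sub_r, !inner_zero_l. ring.
Qed.

Lemma inK_ext u v : inK DA T u -> (forall t x, u t x = v t x) -> inK DA T v.
Proof.
  intros (N & a & b & Phi & h & Hreg & Hu) E. exists N, a, b, Phi, h. split; auto.
  intros t x. rewrite <- E. apply Hu.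
Qed.

Lemma inK_add u v : inK DA T u -> inK DA T v -> inK DA T (fun t x => u t x + v t x).
Proof.
  intros (N1 & a1 & b1 & P1 & h1 & C1 & E1) (N2 & a2 & b2 & P2 & h2 & C2 & E2).
  set (glue := fun {A} (f1 f2 : nat -> A) k => if Nat.ltb k N1 then f1 k else f2 (k - N1)%nat).
  exists (N1 + N2)%nat, (glue _ a1 a2), (glue _ b1 b2), (glue _ P1 P2), (glue _ h1 h2). split.
  - intros k Hk. unfold glue. destruct (Nat.ltb_spec k N1); [apply C1; auto|apply C2; lia].
  - intros t x. rewrite fsum_app, E1, E2. unfold glue. f_equal; apply fsum_ext; intros k Hk.
    + destruct (Nat.ltb_spec k N1); [reflexivity|lia].
    + destruct (Nat.ltb_spec (N1 + k) N1); [lia|]. replace (N1 + k - N1)%nat with k by lia. reflexivity.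
Qed.

Lemma inK_term Phi a b h : C1_real Phi -> periodic T Phi -> DA h ->
  inK DA T (fun t x => Phi t * (a * cos (<< x, h >>) - b * sin (<< x, h >>))).
Proof.
  intros HPhi HPer Hh. exists 1%nat, (fun _ => a), (fun _ => b), (fun _ => Phi), (fun _ _ => h). split.
  - intros k _. repeat split; auto. apply C1_H_const.
  - intros t x. simpl. ring.
Qed.

Lemma inK_zero : inK DA T (fun _ _ => 0).
Proof.
  assert (H0 : C1_real (fun _ => 0)).
  { exists (fun _ => 0). split; [intros; apply derivable_pt_lim_const|].
    intros x. apply continuity_const. intros ? ?; reflexivity. }
  eapply inK_ext; [apply (inK_term (fun _ => 0) 0 0 (hzero H) H0 (fun _ => eq_refl) DA_zero)|].
  intros; cbv beta; ring.
Qed.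

Lemma inK_fsum M (G : nat -> R -> H -> R) : (forall j, inK DA T (G j)) ->
  inK DA T (fun t x => fsum M (fun j => G j t x)).
Proof. intros HG. induction M as [|M IH]; simpl; [apply inK_zero|apply inK_add; auto]. Qed.

Lemma inK_msum N d (F : (nat -> nat) -> R -> H -> R) : (forall J, inK DA T (F J)) ->
  inK DA T (fun t x => msum N d (fun J => F J t x)).
Proof.
  revert F. induction d as [|d IH]; intros F HF; simpl; [apply HF|].
  apply (inK_fsum N (fun j t x => msum N d (fun J => F (upd J d j) t x))).
  intros j. apply (IH (fun J => F (upd J d j))). auto.
Qed.

Inductive trig_DA : (H -> R) -> Prop :=
| trig_DA_term a b h : DA h -> trig_DA (fun x => a * cos (<< x, h >>) - b * sin (<< x, h >>))
| trig_DA_add f g : trig_DA f -> trig_DA g -> trig_DA (fun x => f x + g x)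
| trig_DA_ext f g : trig_DA f -> (forall x, f x = g x) -> trig_DA g.

Lemma trig_DA_const c : trig_DA (fun _ => c).
Proof.
  eapply trig_DA_ext; [apply (trig_DA_term c 0 (hzero H) DA_zero)|].
  intros x. simpl. rewrite inner_zero_r, cos_0. ring.
Qed.

Lemma trig_DA_scal c f : trig_DA f -> trig_DA (fun x => c * f x).
Proof.
  induction 1 as [a b h Hh| f g _ IHf _ IHg| f g _ IH E].
  - eapply trig_DA_ext; [apply (trig_DA_term (c * a) (c * b) h Hh)|]. intros; simpl; ring.
  - eapply trig_DA_ext; [apply (trig_DA_add _ _ IHf IHg)|]. intros; simpl; ring.
  - eapply trig_DA_ext; [apply IH|]. intros; simpl; rewrite E; reflexivity.
Qed.

(** Product formulas: a product of two terms is a sum of terms with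
    frequencies [h + k] and [h - k]. *)
Lemma trig_DA_mul_term a b h f : DA h -> trig_DA f ->
  trig_DA (fun x => (a * cos (<< x, h >>) - b * sin (<< x, h >>)) * f x).
Proof.
  intros Hh. induction 1 as [c d k Hk| f g _ IHf _ IHg| f g _ IH E].
  - eapply trig_DA_ext; [apply trig_DA_add|].
    + apply (trig_DA_term ((a * c - b * d) / 2) ((a * d + b * c) / 2) (hadd H h k)), DA_add; auto.
    + apply (trig_DA_term ((a * c + b * d) / 2) ((b * c - a * d) / 2) (hsub h k)), DA_sub; auto.
    + intros x. simpl. rewrite inner_add_r, inner_sub_r, cos_plus, sin_plus, cos_minus, sin_minus. field.
  - eapply trig_DA_ext; [apply (trig_DA_add _ _ IHf IHg)|]. intros; simpl; ring.
  - eapply trig_DA_ext; [apply IH|]. intros; simpl; rewrite E; reflexivity.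
Qed.

Lemma trig_DA_mul f g : trig_DA f -> trig_DA g -> trig_DA (fun x => f x * g x).
Proof.
  intros Hf Hg. induction Hf as [a b h Hh| f1 f2 _ IH1 _ IH2| f1 f2 _ IH E].
  - apply trig_DA_mul_term; auto.
  - eapply trig_DA_ext; [apply (trig_DA_add _ _ IH1 IH2)|]. intros; simpl; ring.
  - eapply trig_DA_ext; [apply IH|]. intros; simpl; rewrite E; reflexivity.
Qed.

Lemma trig_DA_fprod d (g : nat -> H -> R) : (forall i, trig_DA (g i)) ->
  trig_DA (fun x => fprod d (fun i => g i x)).
Proof. intros Hg. induction d; simpl; [apply trig_DA_const|apply trig_DA_mul; auto]. Qed.

Lemma trig_DA_kern m al be v : DA v -> trig_DA (fun x => kern m (al * << x, v >> + be)).
Proof.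
  intros Hv. unfold kern. induction m as [|m IH]; simpl.
  - apply trig_DA_const.
  - apply trig_DA_mul; auto. eapply trig_DA_ext.
    + apply trig_DA_add; [apply (trig_DA_const (/ 2))|].
      apply (trig_DA_term (cos be / 2) (sin be / 2) (hscal H al v)), DA_scal, Hv.
    + intros x. simpl. rewrite inner_scal_r, cos_plus. field.
Qed.

Lemma inK_time_space Phi f : C1_real Phi -> periodic T Phi -> trig_DA f ->
  inK DA T (fun t x => Phi t * f x).
Proof.
  intros HPhi HPer. induction 1 as [a b h Hh| f g _ IHf _ IHg| f g _ IH E].
  - apply inK_term; auto.
  - eapply inK_ext; [apply (inK_add _ _ IHf IHg)|]. intros; simpl; ring.
  - eapply inK_ext; [apply IH|]. intros; simpl; rewrite E; reflexivity.
Qed.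

End ClassK.

(** * The approximants

    At level [n], with scale [r = n + 1] and [N = mm n + 1] grid nodes, the
    point [(t, x)] gets the [n + 1] angles [pi <x, gs i> / r + pi] ([i < n])
    and [2 pi t / T]. Each angle is spread over the grid by the normalised
    kernel, and [approx n] is the resulting weighted mean of the values of
    [f] at the grid points [(T J_n / N, sum_(i<n) r/pi (grid J_i - pi) gs i)]. *)

Definition scale (n : nat) : R := INR n + 1.

Lemma scale_ge1 n : 1 <= scale n.
Proof. unfold scale. pose proof (pos_INR n). lra. Qed.

Lemma kern_periodic m u : kern m (u + 2 * PI) = kern m u.
Proof. unfold kern. rewrite <- (cos_period u 1). simpl INR. rewrite Rmult_1_r. reflexivity. Qed.

Lemma near_coordinate r y g dl : 1 <= r -> Rabs y < r / 2 -> 0 <= g < 2 * PI -> 0 < dl <= PI / 4 ->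
  cos (PI * y / r + PI - g) > cos dl -> Rabs (r / PI * (g - PI) - y) <= r * dl / PI.
Proof.
  intros Hr Hy Hg Hdl Hc. pose proof PI_RGT_0.
  destruct (cos_near _ dl ltac:(lra) Hc) as [k Hk].
  assert (Hz : PI / 2 < PI * y / r + PI < 3 * PI / 2).
  { apply Rabs_def2 in Hy as [Hy1 Hy2].
    assert (Hpr : 0 < PI / r) by (apply Rdiv_lt_0_compat; lra).
    replace (PI * y / r) with (PI / r * y) by (field; lra).
    pose proof (Rmult_lt_compat_l _ _ _ Hpr Hy1). pose proof (Rmult_lt_compat_l _ _ _ Hpr Hy2).
    replace (PI / r * (r / 2)) with (PI / 2) in * by (field; lra).
    replace (PI / r * - (r / 2)) with (- (PI / 2)) in * by (field; lra). lra. }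
  rewrite (no_winding _ _ _ k Hz Hg Hdl Hk), Rmult_0_r, Rminus_0_r in Hk.
  replace (r / PI * (g - PI) - y) with (- (r / PI) * (PI * y / r + PI - g)) by (field; lra).
  rewrite Rabs_mult, Rabs_Ropp, Rabs_right by (left; apply Rdiv_lt_0_compat; lra).
  replace (r * dl / PI) with (r / PI * dl) by (field; lra).
  apply Rmult_le_compat_l; [left; apply Rdiv_lt_0_compat|]; lra.
Qed.

Lemma near_time T t g dl : T > 0 -> 0 < dl < PI -> cos (2 * PI * t / T - g) > cos dl ->
  exists k : Z, Rabs (T * g / (2 * PI) + IZR k * T - t) < T * dl / (2 * PI).
Proof.
  intros HT Hdl Hc. pose proof PI_RGT_0.
  destruct (cos_near _ dl Hdl Hc) as [k Hk]. exists k.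
  replace (T * g / (2 * PI) + IZR k * T - t) with (- (T / (2 * PI)) * (2 * PI * t / T - g - 2 * PI * IZR k))
    by (field; lra).
  rewrite Rabs_mult, Rabs_Ropp, Rabs_right by (left; apply Rdiv_lt_0_compat; lra).
  replace (T * dl / (2 * PI)) with (T / (2 * PI) * dl) by (field; lra).
  apply Rmult_lt_compat_l; [apply Rdiv_lt_0_compat|]; lra.
Qed.

Section Approximation.
Variables (H : RHilbert) (T : R) (f : R -> H -> R) (Sb : R) (a : nat -> H) (mm : nat -> nat).
Hypotheses (HT : T > 0) (Hper : forall t x, f (t + T) x = f t x)
  (HSb : forall t x, Rabs (f t x) <= Sb).

Notation "<< x , y >>" := (hinner H x y).

Definition nodes (n : nat) : nat := S (mm n).

Definition angle (n : nat) (t : R) (x : H) (i : nat) : R :=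
  if Nat.ltb i n then PI * << x, gs H a i >> / scale n + PI else 2 * PI * t / T.

Definition weight (n : nat) (t : R) (x : H) (i j : nat) : R :=
  kern (mm n) (angle n t x i - grid (nodes n) j) / kern_mass (mm n).

Definition node_value (n : nat) (J : nat -> nat) : R :=
  f (T * INR (J n) / INR (nodes n))
    (comb H a n (fun i => scale n / PI * (grid (nodes n) (J i) - PI))).

Definition approx (n : nat) (t : R) (x : H) : R :=
  msum (nodes n) (S n) (fun J => node_value n J * fprod (S n) (fun i => weight n t x i (J i))).

(** Each row of weights is a probability vector (the grid sums of the
    kernel equal its normalising constant). *)
Lemma weight_nonneg n t x i j : 0 <= weight n t x i j.
Proof.
  unfold weight. pose proof (kern_mass_ge1 (mm n)). pose proof (kern_bounds (mm n) (angle n t x i - grid (nodes n) j)).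
  apply Rmult_le_pos; [lra|left; apply Rinv_0_lt_compat; lra].
Qed.

Lemma weight_sum n t x i : fsum (nodes n) (weight n t x i) = 1.
Proof.
  unfold weight, Rdiv. pose proof (kern_mass_ge1 (mm n)).
  rewrite (fsum_ext _ _ (fun j => / kern_mass (mm n) * kern (mm n) (angle n t x i - grid (nodes n) j)))
    by (intros; ring).
  rewrite fsum_scal. unfold nodes. rewrite kern_grid_sum. field. lra.
Qed.

Lemma weight_total n t x : msum (nodes n) (S n) (fun J => fprod (S n) (fun i => weight n t x i (J i))) = 1.
Proof. rewrite msum_prod. apply fprod_one. intros; apply weight_sum. Qed.

Lemma Sb_nonneg : 0 <= Sb.
Proof. pose proof (HSb 0 (hzero H)). pose proof (Rabs_pos (f 0 (hzero H))). lra. Qed.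

(** Being a weighted mean of values of [f], [approx n] is bounded by [Sb]. *)
Lemma approx_bound n t x : Rabs (approx n t x) <= Sb.
Proof.
  unfold approx. eapply Rle_trans; [apply msum_abs|].
  eapply Rle_trans; [apply msum_le with (G := fun J => Sb * fprod (S n) (fun i => weight n t x i (J i)))|].
  - intros J _. assert (0 <= fprod (S n) (fun i => weight n t x i (J i))) by (apply fprod_nonneg; intros; apply weight_nonneg).
    rewrite Rabs_mult, (Rabs_right (fprod _ _)) by lra. apply Rmult_le_compat_r; auto.
    unfold node_value. apply HSb.
  - rewrite msum_scal, weight_total. lra.
Qed.

Lemma weight_space n t x i j : (i < n)%nat -> weight n t x i j =
  / kern_mass (mm n) * kern (mm n) (PI / scale n * << x, gs H a i >> + (PI - grid (nodes n) j)).
Proof.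
  intros Hi. unfold weight, angle. destruct (Nat.ltb_spec i n); [|lia].
  pose proof (scale_ge1 n).
  replace (PI * << x, gs H a i >> / scale n + PI - grid (nodes n) j)
    with (PI / scale n * << x, gs H a i >> + (PI - grid (nodes n) j)) by (field; lra).
  unfold Rdiv at 1. apply Rmult_comm.
Qed.

Lemma weight_time n t x j : weight n t x n j =
  / kern_mass (mm n) * kern (mm n) (2 * PI / T * t - grid (nodes n) j).
Proof.
  unfold weight, angle. rewrite Nat.ltb_irrefl.
  replace (2 * PI * t / T) with (2 * PI / T * t) by (field; lra).
  unfold Rdiv at 1. apply Rmult_comm.
Qed.

(** Each approximant lies in [K]: each summand is a [C^1] periodic kernel in
    [t] times a product of trigonometric kernels in the coordinates
    [<x, gs i>], and [gs i] lies in [DA]. *)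
Lemma approx_inK (DA : H -> Prop) : dense_subspace DA -> (forall j, DA (a j)) ->
  forall n, inK DA T (approx n).
Proof.
  intros HDA HaDA n. set (N := nodes n). set (Z := kern_mass (mm n)).
  eapply inK_ext.
  - apply (inK_msum H DA T HDA N (S n) (fun J t x =>
      (node_value n J / Z * kern (mm n) (2 * PI / T * t - grid N (J n))) *
      fprod n (fun i => / Z * kern (mm n) (PI / scale n * << x, gs H a i >> + (PI - grid N (J i)))))).
    intros J. apply inK_time_space; auto.
    + apply C1_kern_affine.
    + intros t. rewrite <- (kern_periodic _ (2 * PI / T * t - _)). do 2 f_equal. field. lra.
    + apply trig_DA_fprod; auto. intros i. apply trig_DA_scal, trig_DA_kern; auto. apply gs_DA; auto.
  - intros t x. unfold approx. apply msum_ext. intros J. cbn [fprod].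
    rewrite weight_time, (fprod_ext n (fun i => weight n t x i (J i)) (fun i => / Z * kern (mm n) (PI / scale n * << x, gs H a i >> + (PI - grid N (J i)))))
      by (intros; apply weight_space; auto).
    fold N Z. pose proof (kern_mass_ge1 (mm n)). unfold Z. field. lra.
Qed.

(** ** Error analysis *)

Definition delta (n : nat) : R := PI / (4 * scale n ^ 2).

Definition decay (n : nat) : R := (1 + cos (delta n)) / 2.

Lemma delta_bounds n : 0 < delta n <= PI / 4.
Proof.
  unfold delta. pose proof PI_RGT_0. pose proof (scale_ge1 n). split.
  - apply Rdiv_lt_0_compat; nra.
  - apply Rmult_le_reg_r with (4 * scale n ^ 2); [nra|].
    replace (PI / (4 * scale n ^ 2) * (4 * scale n ^ 2)) with PI by (field; nra).
    replace (PI / 4 * (4 * scale n ^ 2)) with (PI * scale n ^ 2) by field. assert (1 <= scale n ^ 2) by nra. nra.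
Qed.

Lemma decay_bounds n : 0 < decay n < 1.
Proof.
  unfold decay. pose proof (delta_bounds n). pose proof PI_RGT_0.
  assert (cos (delta n) < 1) by (rewrite <- cos_0; apply cos_decreasing_1; lra).
  assert (cos PI < cos (delta n)) by (apply cos_decreasing_1; lra).
  rewrite cos_PI in *. lra.
Qed.

Definition far (n : nat) (t : R) (x : H) (i j : nat) : R :=
  if Rle_dec (cos (angle n t x i - grid (nodes n) j)) (cos (delta n)) then 1 else 0.

Lemma far_01 n t x i j : 0 <= far n t x i j <= 1.
Proof. unfold far. destruct Rle_dec; lra. Qed.

Lemma far_mass n t x i0 : (i0 < S n)%nat ->
  msum (nodes n) (S n) (fun J => fprod (S n) (fun i => weight n t x i (J i)) * far n t x i0 (J i0))
  <= INR (nodes n) * decay n ^ mm n.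
Proof.
  intros Hi0. rewrite msum_marginal by (auto; intros; apply weight_sum).
  rewrite <- fsum_const. apply fsum_le. intros j _.
  assert (Hd : 0 <= decay n ^ mm n) by (apply pow_le; pose proof (decay_bounds n); lra).
  unfold far. destruct Rle_dec as [Hfar|]; [|lra].
  rewrite Rmult_1_r. unfold weight, Rdiv. pose proof (kern_mass_ge1 (mm n)).
  pose proof (kern_far (mm n) _ _ Hfar). pose proof (kern_bounds (mm n) (angle n t x i0 - grid (nodes n) j)).
  assert (/ kern_mass (mm n) <= 1) by (rewrite <- Rinv_1; apply Rinv_le_contravar; lra).
  assert (0 < / kern_mass (mm n)) by (apply Rinv_0_lt_compat; lra).
  unfold decay. nra.
Qed.

Lemma f_periodic_Z k s y : f (s + IZR k * T) y = f s y.
Proof.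
  assert (Hn : forall m s, f (s + INR m * T) y = f s y).
  { induction m as [|m IH]; intros s0; [simpl; rewrite Rmult_0_l, Rplus_0_r; reflexivity|].
    rewrite S_INR. replace (s0 + (INR m + 1) * T) with ((s0 + INR m * T) + T) by ring. rewrite Hper; auto. }
  destruct (Z_le_gt_dec 0 k).
  - rewrite <- (Z2Nat.id k), <- INR_IZR_INZ by auto. auto.
  - rewrite <- (Hn (Z.to_nat (- k))), INR_IZR_INZ, Z2Nat.id, opp_IZR by lia. f_equal. ring.
Qed.

Variables (n : nat) (t : R) (x : H) (eps eta : R).
Hypotheses (Heps : 0 < eps) (Heta : 0 < eta)
  (Hcont : forall s y, Rabs (s - t) < eta -> hnorm (hsub y x) < eta -> Rabs (f s y - f t x) < eps)
  (Hx : 4 * << x, x >> < scale n)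
  (Htime : T / (8 * scale n) < eta)
  (Hspace : sqdist H x (Pn H a n x) + / (16 * scale n) < eta ^ 2).

Lemma near_node_value J : (forall i, (i < S n)%nat -> (J i < nodes n)%nat) ->
  (forall i, (i < S n)%nat -> cos (angle n t x i - grid (nodes n) (J i)) > cos (delta n)) ->
  Rabs (node_value n J - f t x) < eps.
Proof.
  intros HJ Hnear. pose proof PI_RGT_0. pose proof (delta_bounds n).
  set (N := nodes n). set (r := scale n). assert (Hr : 1 <= r) by apply scale_ge1.
  assert (HN : 0 < INR N) by (apply lt_0_INR; unfold N, nodes; lia).
  pose proof (Hnear n ltac:(lia)) as Hn. unfold angle in Hn. rewrite Nat.ltb_irrefl in Hn.
  destruct (near_time T t (grid N (J n)) (delta n) HT ltac:(lra) Hn) as [k Hk].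
  assert (Hs : Rabs (T * INR (J n) / INR N + IZR k * T - t) < eta).
  { replace (T * INR (J n) / INR N) with (T * grid N (J n) / (2 * PI)) by (unfold grid; field; lra).
    eapply Rlt_le_trans; [apply Hk|]. apply Rle_trans with (T / (8 * r)); [|unfold r; lra].
    unfold delta. fold r. apply Rmult_le_reg_r with (8 * r ^ 2); [nra|].
    replace (T * (PI / (4 * r ^ 2)) / (2 * PI) * (8 * r ^ 2)) with T by (field; nra).
    replace (T / (8 * r) * (8 * r ^ 2)) with (T * r) by (field; lra). nra. }
  set (c := fun i => r / PI * (grid N (J i) - PI)).
  assert (Hc : forall i, (i < n)%nat -> (c i * gs_sq H a i - << x, gs H a i >>) ^ 2 <= / (16 * r ^ 2)).
  { intros i Hi. set (y := << x, gs H a i >>).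
    assert (Hy : Rabs y < r / 2).
    { pose proof (coord_bound H a (S i) x i ltac:(lia)) as Hb. fold y in Hb.
      assert (Hsq : Rsqr y < Rsqr (r / 2)) by (unfold Rsqr; simpl in Hb; unfold r in *; nra).
      apply Rsqr_lt_abs_0 in Hsq. rewrite (Rabs_right (r / 2)) in Hsq by lra. exact Hsq. }
    pose proof (Hnear i ltac:(lia)) as Hi'. unfold angle in Hi'. destruct (Nat.ltb_spec i n); [|lia].
    pose proof (near_coordinate r y _ _ ltac:(lra) Hy (grid_bounds N (J i) (HJ i ltac:(lia))) H1 Hi') as Hci.
    replace (r * delta n / PI) with (/ (4 * r)) in Hci by (unfold delta; fold r; field; lra).
    destruct (gs_sq_01 H a i) as [E|E]; rewrite E.
    - unfold y. rewrite hinner_sym, inner_null by auto. replace ((c i * 0 - 0) ^ 2) with 0 by ring.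
      left; apply Rinv_0_lt_compat; nra.
    - rewrite Rmult_1_r. replace (/ (16 * r ^ 2)) with ((/ (4 * r)) ^ 2) by (field; lra).
      rewrite <- (pow2_abs (c i - y)). apply pow_incr. split; [apply Rabs_pos|exact Hci]. }
  assert (HX : sqdist H (comb H a n c) x < eta ^ 2).
  { rewrite sqdist_comb. eapply Rle_lt_trans; [|apply Hspace]. apply Rplus_le_compat_l.
    eapply Rle_trans; [apply fsum_le, Hc|]. rewrite fsum_const.
    apply Rmult_le_reg_r with (16 * r ^ 2); [nra|].
    replace (INR n * / (16 * r ^ 2) * (16 * r ^ 2)) with (INR n) by (field; lra).
    unfold r, scale. replace (/ (16 * (INR n + 1)) * (16 * (INR n + 1) ^ 2)) with (INR n + 1); [lra|]. field. pose proof (pos_INR n). lra. }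
  unfold node_value. fold N r. fold c. rewrite <- (f_periodic_Z k).
  apply Hcont; [exact Hs|apply norm_of_sqdist; auto].
Qed.

Lemma node_error J : (forall i, (i < S n)%nat -> (J i < nodes n)%nat) ->
  Rabs (node_value n J - f t x) <= eps + 2 * Sb * fsum (S n) (fun i => far n t x i (J i)).
Proof.
  intros HJ. pose proof Sb_nonneg.
  assert (Hfs : 0 <= fsum (S n) (fun i => far n t x i (J i))) by (apply fsum_nonneg; intros; apply far_01).
  destruct (classic (exists i, (i < S n)%nat /\ cos (angle n t x i - grid (nodes n) (J i)) <= cos (delta n)))
    as [[i [Hi Hfar]]|Hnear].
  - assert (1 <= fsum (S n) (fun i => far n t x i (J i))).
    { replace 1 with (far n t x i (J i)) by (unfold far; destruct Rle_dec; [reflexivity|contradiction]).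
      apply (fsum_le_term (S n) (fun i => far n t x i (J i))); auto. intros; apply far_01. }
    assert (Rabs (node_value n J - f t x) <= 2 * Sb).
    { unfold Rminus. eapply Rle_trans; [apply Rabs_triang|]. rewrite Rabs_Ropp.
      unfold node_value. pose proof (HSb t x). pose proof (HSb (T * INR (J n) / INR (nodes n))
        (comb H a n (fun i => scale n / PI * (grid (nodes n) (J i) - PI)))). lra. }
    nra.
  - left. apply Rlt_le_trans with eps; [|nra]. apply near_node_value; auto.
    intros i Hi. apply Rnot_le_gt. intros Hc. apply Hnear. eauto.
Qed.

Lemma approx_error :
  Rabs (approx n t x - f t x) <= eps + 2 * Sb * (scale n * (INR (nodes n) * decay n ^ mm n)).
Proof.
  set (W := fun J => fprod (S n) (fun i => weight n t x i (J i))).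
  assert (HW : forall J, 0 <= W J) by (intros; apply fprod_nonneg; intros; apply weight_nonneg).
  assert (E : approx n t x - f t x = msum (nodes n) (S n) (fun J => W J * (node_value n J - f t x))).
  { rewrite (msum_ext _ _ _ (fun J => node_value n J * W J + (- f t x) * W J)) by (intros; ring).
    rewrite msum_plus, msum_scal. unfold W. rewrite weight_total. unfold approx. ring. }
  rewrite E. eapply Rle_trans; [apply msum_abs|].
  eapply Rle_trans; [apply msum_le with
    (G := fun J => eps * W J + 2 * Sb * fsum (S n) (fun i => W J * far n t x i (J i)))|].
  - intros J HJ. rewrite Rabs_mult, (Rabs_right (W J)), fsum_scal by (apply Rle_ge, HW).
    pose proof (node_error J HJ). pose proof (HW J). nra.
  - rewrite msum_plus, !msum_scal. unfold W at 1. rewrite weight_total, msum_fsum, Rmult_1_r.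
    apply Rplus_le_compat_l, Rmult_le_compat_l; [pose proof Sb_nonneg; lra|].
    unfold scale. rewrite <- S_INR, <- fsum_const. apply fsum_le. intros i Hi. apply far_mass; auto.
Qed.

End Approximation.

Lemma approx_converges (H : RHilbert) T f Sb (a : nat -> H) mm :
  T > 0 -> (forall t x, f (t + T) x = f t x) -> (forall t x, Rabs (f t x) <= Sb) ->
  (forall t x eps, eps > 0 -> exists delta, delta > 0 /\ forall s y,
      Rabs (s - t) < delta -> hnorm (hsub y x) < delta -> Rabs (f s y - f t x) < eps) ->
  (forall x r, r > 0 -> exists j, sqdist H x (a j) < r) ->
  (forall n, INR (nodes mm n) * decay n ^ mm n <= / scale n ^ 2) ->
  forall t x, Un_cv (fun n => approx H T f a mm n t x) (f t x).
Proof.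
  intros HT Hper HSb Hcont Hdense Hmm t x e He.
  destruct (Hcont t x (e / 2) ltac:(lra)) as [eta [Heta Hc]].
  assert (Heta2 : 0 < eta ^ 2 / 2) by (pose proof (pow_lt eta 2 Heta); lra).
  destruct (Hdense x (eta ^ 2 / 2) Heta2) as [j Hj].
  assert (Hsmall : forall c e', 0 < e' -> eventually (fun n => c / scale n < e'))
    by (intros; apply eventually_div_small; auto).
  assert (Hev : eventually (fun n => (j < n)%nat /\ 4 * hinner H x x < scale n /\
     T / 8 / scale n < eta /\ / 16 / scale n < eta ^ 2 / 2 /\ 2 * Sb / scale n < e / 2)).
  { repeat apply eventually_and; try apply Hsmall; try lra.
    - exists (S j). intros; lia.
    - destruct (eventually_gt_INR (4 * hinner H x x)) as [n0 Hn0]. exists n0. intros n Hn.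
      specialize (Hn0 n Hn). unfold scale. lra. }
  destruct Hev as [n0 Hn0]. exists n0. intros n Hn. unfold R_dist.
  destruct (Hn0 n Hn) as (Hjn & Hx & Ht & Hs & HS).
  pose proof (scale_ge1 n) as Hr. pose proof (Hmm n) as Hm.
  pose proof (best_approx H a j n x Hjn).
  assert (HSb0 : 0 <= Sb) by (pose proof (HSb t x); pose proof (Rabs_pos (f t x)); lra).
  eapply Rle_lt_trans.
  - apply (approx_error H T f Sb a mm HT Hper HSb n t x (e / 2) eta); auto; try lra.
    + replace (T / (8 * scale n)) with (T / 8 / scale n) by (field; lra). exact Ht.
    + replace (/ (16 * scale n)) with (/ 16 / scale n) by (field; lra). lra.
  - assert (Hfar : scale n * (INR (nodes mm n) * decay n ^ mm n) <= / scale n).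
    { apply Rle_trans with (scale n * / scale n ^ 2); [apply Rmult_le_compat_l; lra|].
      right. field. lra. }
    replace (2 * Sb / scale n) with (2 * Sb * / scale n) in HS by (unfold Rdiv; ring).
    pose proof (Rmult_le_compat_l (2 * Sb) _ _ ltac:(lra) Hfar). lra.
Qed.

Theorem mainTheorem19 (H : RHilbert) (DA : H -> Prop) (T : R)
  (HT : T > 0) (HDA : dense_subspace DA) (f : R -> H -> R) (S : R)
  (Hf : Cb_star T f) (HS : is_sup_abs f S) :
  exists u : nat -> R -> H -> R,
    (forall n, inK DA T (u n)) /\
    (forall t x, Un_cv (fun n => u n t x) (f t x)) /\
    (forall n t x, Rabs (u n t x) <= 1 + S).
Proof.
  destruct Hf as [Hcont [_ Hper]].
  assert (HSb : forall t x, Rabs (f t x) <= S) by (intros t x; apply HS; exists t, x; reflexivity).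
  destruct (dense_sequence H DA HDA) as [a [HaDA Ha]].
  (* kernel degrees making the far weight at level n at most 1 / scale n ^ 2 *)
  assert (Hdeg : forall n, exists m, INR (Datatypes.S m) * decay n ^ m <= / scale n ^ 2).
  { intros n. apply geometric_small; [apply decay_bounds|].
    apply Rinv_0_lt_compat, pow_lt. pose proof (scale_ge1 n). lra. }
  destruct (functional_choice _ Hdeg) as [mm Hmm].
  exists (approx H T f a mm). split; [|split].
  - apply approx_inK; auto.
  - apply (approx_converges H T f S a mm); auto.
  - intros n t x. pose proof (approx_bound H T f S a mm HSb n t x). lra.
Qed.
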